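(* Fix stress levels $x_1<x_2$, a stress-change time $\tau>0$, and inspection times $0=t_0<t_1<\cdots<t_L$ with $t_k=\tau$ for some $1\le k<L$. Let $\theta=(\gamma_0,\gamma_1,a_1)\in\Theta=(0,\infty)^3$, and let $s=s(\theta)=u-\tau$, where $u$ is the unique positive root of $\frac{\gamma_1}{2}u^2+\gamma_0u-e^{a_1(x_1-x_2)}\left(\gamma_0\tau+\gamma_1\frac{\tau^2}{2}\right)=0$. Define $$R_\theta(t,x_1)=\exp\!\Big(-e^{a_1x_1}\big(\gamma_0t+\gamma_1\tfrac{t^2}{2}\big)\Big),\qquad R_\theta(t,x_2)=\exp\!\Big(-e^{a_1x_2}\big(\gamma_0(t+s)+\gamma_1\tfrac{(t+s)^2}{2}\big)\Big),$$ and the step-stress reliability $R_\theta(t)=R_\theta(t,x_1)$ for $0\le t\le\tau$, $R_\theta(t)=R_\theta(t,x_2)$ for $t\ge\tau$. Let $\pi_j(\theta)=R_\theta(t_{j-1})-R_\theta(t_j)$ for $j=1,\dots,L$, $\pi_{L+1}(\theta)=R_\theta(t_L)$, $\pi(\theta)=(\pi_1(\theta),\dots,\pi_{L+1}(\theta))^T$. Given observed counts $(n_1,\dots,n_{L+1})$ with $N=\sum_j n_j$ and $\widehat p=(n_1/N,\dots,n_{L+1}/N)^T$, and $\beta\ge0$, let $\widehat\theta_\beta$ be a minimum density power divergence estimator, i.e. a minimizer over $\Theta$ of $d_\beta(\widehat p,\pi(\theta))$, where for $\beta>0$ $$d_\beta(\widehat p,\pi(\theta))=\sum_{j=1}^{L+1}\Big[\pi_j(\theta)^{\beta+1}-\big(1+\tfrac1\beta\big)\pi_j(\theta)^\beta\widehat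 p_j+\tfrac1\beta\widehat p_j^{\beta+1}\Big]$$ and for $\beta=0$, $d_0(\widehat p,\pi(\theta))=\sum_{j}\widehat p_j\log(\widehat p_j/\pi_j(\theta))$. Then $\widehat\theta_\beta$ satisfies $U_\beta(\widehat\theta_\beta)=0\in\mathbb{R}^3$, where $$U_\beta(\theta)=W(\theta)^TD(\theta)^{\beta-1}\big(\widehat p-\pi(\theta)\big),$$ $D(\theta)=\mathrm{diag}(\pi_1(\theta),\dots,\pi_{L+1}(\theta))$, and $W(\theta)$ is the $(L+1)\times3$ Jacobian matrix of $\pi(\theta)$ whose $j$-th row is $w_j^T$ with $w_j=\frac{\partial R_\theta(t_{j-1},x_1)}{\partial\theta}-\frac{\partial R_\theta(t_j,x_1)}{\partial\theta}$ if $t_{j-1}<\tau$, $w_j=\frac{\partial R_\theta(t_{j-1},x_2)}{\partial\theta}-\frac{\partial R_\theta(t_j,x_2)}{\partial\theta}$ if $\tau\le t_{j-1}$ and $j\le L$, and $w_{L+1}=\frac{\partial R_\theta(t_L,x_2)}{\partial\theta}$. Here, with $k_1(t)=\gamma_1t+\gamma_0$ and $k_2(t)=\frac{\gamma_1}{2}t+\gamma_0$, the gradients are $$\frac{\partial R_\theta(t,x_1)}{\partial\gamma_0}=-R_\theta(t,x_1)e^{a_1x_1}t,\quad \frac{\partial R_\theta(t,x_1)}{\partial\gamma_1}=-R_\theta(t,x_1)e^{a_1x_1}\frac{t^2}{2},\quad \frac{\partial R_\theta(t,x_1)}{\partial a_1}=-R_\theta(t,x_1)e^{a_1x_1}t\,k_2(t)\,x_1,$$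 $$\frac{\partial R_\theta(t,x_2)}{\partial\gamma_0}=-R_\theta(t,x_2)e^{a_1x_2}\Big((t+s)+\frac{\gamma_1}{2}\frac{(\tau+s)s}{k_2(\tau)}\frac{k_1(t+s)}{k_1(\tau+s)}\Big),$$ $$\frac{\partial R_\theta(t,x_2)}{\partial\gamma_1}=-R_\theta(t,x_2)e^{a_1x_2}\Big(\frac{(t+s)^2}{2}-\frac{\gamma_0}{2}\frac{(\tau+s)s}{k_2(\tau)}\frac{k_1(t+s)}{k_1(\tau+s)}\Big),$$ $$\frac{\partial R_\theta(t,x_2)}{\partial a_1}=-R_\theta(t,x_2)e^{a_1x_2}\Big[(t+s)k_2(t+s)x_2+\frac{k_1(t+s)}{k_1(\tau+s)}(\tau+s)k_2(\tau+s)(x_1-x_2)\Big].$$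
   Context: Interval-monitored simple step-stress accelerated life test under a proportional hazards model with linear baseline hazard $h_0(t)=\gamma_0+\gamma_1t$ and stress effect $e^{a_1x}$, combined with the cumulative exposure model (the shift $s$ makes the cumulative hazard continuous at $\tau$, with $s<0$ and $\tau+s>0$). $N$ devices are tested; $n_j$ is the number failing in $(t_{j-1},t_j]$ for $j\le L$ and $n_{L+1}$ the number surviving past $t_L$. Stress is $x_1$ on $[0,\tau)$ and $x_2$ afterwards. *)

From Stdlib Require Import Reals.
Open Scope R_scope.

(* sum over j = 1 .. L+1 *)
Definition sum1 (L : nat) (f : nat -> R) : R := sum_f_R0 (fun i => f (S i)) L.

(* power with the convention 0^a = 0 (used only for a > 0) *)
Definition pw (x a : R) : R := if Rle_dec x 0 then 0 else Rpower x a.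

Definition Hc (g0 g1 t : R) : R := g0 * t + g1 * (t ^ 2) / 2.
Definition k1 (g0 g1 t : R) : R := g1 * t + g0.
Definition k2 (g0 g1 t : R) : R := g1 / 2 * t + g0.

Definition Rx1 (g0 g1 a1 x1 t : R) : R := exp (- (exp (a1 * x1) * Hc g0 g1 t)).
Definition Rx2 (g0 g1 a1 x2 s t : R) : R := exp (- (exp (a1 * x2) * Hc g0 g1 (t + s))).

Definition Rstep (g0 g1 a1 x1 x2 tau s t : R) : R :=
  if Rle_dec t tau then Rx1 g0 g1 a1 x1 t else Rx2 g0 g1 a1 x2 s t.

Definition pij (g0 g1 a1 x1 x2 tau s : R) (L : nat) (tt : nat -> R) (j : nat) : R :=
  if (j <=? L)%nat
  then Rstep g0 g1 a1 x1 x2 tau s (tt (j - 1)%nat) - Rstep g0 g1 a1 x1 x2 tau s (tt j)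
  else Rstep g0 g1 a1 x1 x2 tau s (tt L).

Definition Ntot (L : nat) (n : nat -> nat) : R := sum1 L (fun j => INR (n j)).
Definition phat (L : nat) (n : nat -> nat) (j : nat) : R := INR (n j) / Ntot L n.

(* density power divergence d_beta(phat, pi); beta = 0: Kullback-Leibler
   (Stdlib's ln 0 = 0 gives the convention 0 * log 0 = 0) *)
Definition dpd (beta : R) (L : nat) (p q : nat -> R) : R :=
  if Req_EM_T beta 0
  then sum1 L (fun j => p j * ln (p j / q j))
  else sum1 L (fun j => Rpower (q j) (beta + 1) - (1 + 1 / beta) * Rpower (q j) beta * p j
                        + 1 / beta * pw (p j) (beta + 1)).

(* components (i = 0: gamma0, i = 1: gamma1, i = 2: a1) of the gradients *)
Definition dRx1 (i : nat) (g0 g1 a1 x1 t : R) : R :=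
  - Rx1 g0 g1 a1 x1 t * exp (a1 * x1) *
    match i with
    | O => t
    | 1%nat => t ^ 2 / 2
    | _ => t * k2 g0 g1 t * x1
    end.

Definition dRx2 (i : nat) (g0 g1 a1 x1 x2 tau s t : R) : R :=
  - Rx2 g0 g1 a1 x2 s t * exp (a1 * x2) *
    match i with
    | O => (t + s) + g1 / 2 * ((tau + s) * s / k2 g0 g1 tau) * (k1 g0 g1 (t + s) / k1 g0 g1 (tau + s))
    | 1%nat => (t + s) ^ 2 / 2 - g0 / 2 * ((tau + s) * s / k2 g0 g1 tau) * (k1 g0 g1 (t + s) / k1 g0 g1 (tau + s))
    | _ => (t + s) * k2 g0 g1 (t + s) * x2
           + k1 g0 g1 (t + s) / k1 g0 g1 (tau + s) * (tau + s) * k2 g0 g1 (tau + s) * (x1 - x2)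
    end.

Definition wj (i : nat) (g0 g1 a1 x1 x2 tau s : R) (L : nat) (tt : nat -> R) (j : nat) : R :=
  if (L <? j)%nat then dRx2 i g0 g1 a1 x1 x2 tau s (tt L)
  else if Rlt_dec (tt (j - 1)%nat) tau
  then dRx1 i g0 g1 a1 x1 (tt (j - 1)%nat) - dRx1 i g0 g1 a1 x1 (tt j)
  else dRx2 i g0 g1 a1 x1 x2 tau s (tt (j - 1)%nat) - dRx2 i g0 g1 a1 x1 x2 tau s (tt j).

Definition Ucomp (i : nat) (beta g0 g1 a1 x1 x2 tau s : R) (L : nat) (tt : nat -> R)
  (p : nat -> R) : R :=
  sum1 L (fun j => wj i g0 g1 a1 x1 x2 tau s L tt j
                   * Rpower (pij g0 g1 a1 x1 x2 tau s L tt j) (beta - 1)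
                   * (p j - pij g0 g1 a1 x1 x2 tau s L tt j)).

From Stdlib Require Import Reals Lra Lia.
From Coquelicot Require Import Coquelicot.
Open Scope R_scope.

(* The estimate is an interior point of the open set Theta, so along every line
   theta_hat + h d the map h |-> d_beta(p_hat, pi(theta_hat + h d)) has a local minimum
   at h = 0 and its derivative vanishes there.  Since d.w_j is the derivative of pi_j
   along the line, that derivative is
   -(beta + 1) sum_j (d.w_j) pi_j^(beta - 1) (p_hat_j - pi_j); for beta = 0 this also
   uses sum_j d.w_j = 0, as the pi_j always sum to one.  The delicate point is the
   shift s(theta): near theta_hat it coincides with the closed-form positive root of its
   quadratic, hence is differentiable, and its derivative follows by implicit
   differentiation; continuity of the cumulative hazard at tau makes the derivative at
   t = tau computable from either side.  Coordinate directions d give U_beta = 0. *)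

Lemma is_derive_val (f : R -> R) (x l l' : R) :
  is_derive f x l -> l = l' -> is_derive f x l'.
Proof. intros H E; subst; exact H. Qed.

Lemma is_derive_Rminus (f g : R -> R) (x df dg : R) :
  is_derive f x df -> is_derive g x dg -> is_derive (fun h => f h - g h) x (df - dg).
Proof. exact (is_derive_minus f g x df dg). Qed.

Lemma locally_pos_affine (g d : R) : 0 < g -> locally 0 (fun h => 0 < g + h * d).
Proof.
  intros Hg.
  assert (Hc : continuous (fun h => g + h * d) 0)
    by (apply (@ex_derive_continuous R_AbsRing R_NormedModule); auto_derive; auto).
  apply (Hc (fun u => 0 < u)), open_gt. lra.
Qed.

Lemma is_derive_local_min (f : R -> R) (x l : R) :
  is_derive f x l -> locally x (fun y => f x <= f y) -> l = 0.
Proof.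
  intros Hd [eps Heps].
  apply is_derive_Reals in Hd.
  apply (deriv_minimum f (x - eps) (x + eps) x (exist _ l Hd)).
  - pose proof (cond_pos eps); lra.
  - pose proof (cond_pos eps); lra.
  - intros y H1 H2. apply Heps. change (Rabs (y - x) < eps). apply Rabs_def1; lra.
Qed.

Lemma is_derive_Rpower_comp (g : R -> R) (x w b : R) :
  is_derive g x w -> 0 < g x ->
  is_derive (fun h => Rpower (g h) b) x (b * Rpower (g x) (b - 1) * w).
Proof.
  intros Hg Hpos.
  assert (Hp : is_derive (fun y => Rpower y b) (g x) (b * Rpower (g x) (b - 1))).
  { apply is_derive_Reals, derivable_pt_lim_power, Hpos. }
  eapply is_derive_val; [exact (is_derive_comp _ g x _ _ Hp Hg)|].
  change (w * (b * Rpower (g x) (b - 1)) = b * Rpower (g x) (b - 1) * w). ring.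
Qed.

Lemma sum1_ext (L : nat) (f g : nat -> R) :
  (forall j, (1 <= j <= S L)%nat -> f j = g j) -> sum1 L f = sum1 L g.
Proof. intros H. apply sum_eq. intros i Hi. apply H. lia. Qed.

Lemma is_derive_sum1 (L : nat) (F : nat -> R -> R) (F' : nat -> R) (x : R) :
  (forall j, (1 <= j <= S L)%nat -> is_derive (F j) x (F' j)) ->
  is_derive (fun h => sum1 L (fun j => F j h)) x (sum1 L F').
Proof.
  intros H. unfold sum1.
  apply (is_derive_ext (fun h => sum_n (fun j => F (S j) h) L)).
  { intro h. apply sum_n_Reals. }
  rewrite <- sum_n_Reals.
  apply (is_derive_sum_n (fun j => F (S j))). intros j Hj. apply H. lia.
Qed.

Lemma sum1_mult_l (L : nat) (c : R) (f : nat -> R) :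
  sum1 L (fun j => c * f j) = c * sum1 L f.
Proof.
  unfold sum1. rewrite scal_sum. apply sum_eq. intros i _. apply Rmult_comm.
Qed.

Lemma sum1_minus (L : nat) (f g : nat -> R) :
  sum1 L (fun j => f j - g j) = sum1 L f - sum1 L g.
Proof. apply minus_sum. Qed.

Lemma sum_f_R0_telescope (r : nat -> R) (m : nat) :
  sum_f_R0 (fun i => r i - r (S i)) m = r 0%nat - r (S m).
Proof. induction m as [|m IH]; simpl; [|rewrite IH]; ring. Qed.

Lemma is_derive_kl_term (q : R -> R) (x w p : R) :
  is_derive q x w -> 0 < q x -> 0 <= p ->
  is_derive (fun h => p * ln (p / q h)) x (- (p * w / q x)).
Proof.
  intros Hq Hpos [Hp|<-].
  - assert (ex_derive q x) by (exists w; exact Hq).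
    auto_derive.
    + repeat split; auto; try lra. apply Rdiv_lt_0_compat; auto.
    + change (Derive (fun y => q y) x) with (Derive q x).
      rewrite (is_derive_unique _ _ _ Hq). field. lra.
  - apply (is_derive_ext (fun _ => 0)); [intro; symmetry; apply Rmult_0_l|].
    eapply is_derive_val; [auto_derive; auto|]. field. lra.
Qed.

Lemma is_derive_dpd_term (q : R -> R) (x w p beta c : R) :
  beta <> 0 -> is_derive q x w -> 0 < q x ->
  is_derive (fun h => Rpower (q h) (beta + 1) - (1 + 1 / beta) * Rpower (q h) beta * p + c) x
    (- (beta + 1) * (w * Rpower (q x) (beta - 1) * (p - q x))).
Proof.
  intros Hb Hq Hpos.
  pose (P1 h := Rpower (q h) (beta + 1)). pose (P2 h := Rpower (q h) beta).
  assert (H1 : is_derive P1 x ((beta + 1) * Rpower (q x) (beta + 1 - 1) * w))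
    by exact (is_derive_Rpower_comp q x w (beta + 1) Hq Hpos).
  assert (H2 : is_derive P2 x (beta * Rpower (q x) (beta - 1) * w))
    by exact (is_derive_Rpower_comp q x w beta Hq Hpos).
  apply (is_derive_ext (fun h => P1 h - (1 + 1 / beta) * P2 h * p + c)); [reflexivity|].
  auto_derive; [split; [eexists; exact H1|split; [eexists; exact H2|exact I]]|].
  change (Derive (fun y => P1 y) x) with (Derive P1 x).
  change (Derive (fun y => P2 y) x) with (Derive P2 x).
  rewrite (is_derive_unique _ _ _ H1), (is_derive_unique _ _ _ H2).
  replace (beta + 1 - 1) with ((beta - 1) + 1) by ring.
  replace (Rpower (q x) beta) with (Rpower (q x) ((beta - 1) + 1)) by (f_equal; ring).
  rewrite Rpower_plus, Rpower_1 by exact Hpos.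
  field. exact Hb.
Qed.

(* [sum1 L W = 0] (the cell probabilities keep summing to one) is used only in
   the Kullback-Leibler case [beta = 0]. *)
Lemma is_derive_dpd (q : nat -> R -> R) (W : nat -> R) (beta x : R) (p : nat -> R) (L : nat) :
  (forall j, (1 <= j <= S L)%nat -> is_derive (q j) x (W j)) ->
  (forall j, (1 <= j <= S L)%nat -> 0 < q j x) ->
  (forall j, 0 <= p j) -> sum1 L W = 0 ->
  is_derive (fun h => dpd beta L p (fun j => q j h)) x
    (- (beta + 1) * sum1 L (fun j => W j * Rpower (q j x) (beta - 1) * (p j - q j x))).
Proof.
  intros Hq Hpos Hp HW. unfold dpd. destruct (Req_EM_T beta 0) as [->|Hb].
  - eapply is_derive_val.
    + apply (is_derive_sum1 L (fun j h => p j * ln (p j / q j h))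
               (fun j => - (p j * W j / q j x))).
      intros j Hj. apply is_derive_kl_term; auto.
    + rewrite (sum1_ext L _ (fun j => (-1) * (W j * p j / q j x))),
        (sum1_ext L (fun j => W j * _ * _) (fun j => W j * p j / q j x - W j)),
        sum1_mult_l, sum1_minus, HW.
      * ring.
      * intros j Hj. specialize (Hpos j Hj).
        replace (0 - 1) with (- (1)) by ring.
        rewrite Rpower_Ropp, Rpower_1 by exact Hpos. field. lra.
      * intros j Hj. specialize (Hpos j Hj). field. lra.
  - eapply is_derive_val.
    + apply is_derive_sum1. intros j Hj. apply is_derive_dpd_term; auto.
    + apply sum1_mult_l.
Qed.

Lemma grid_lt (t : nat -> R) (L : nat) :
  (forall j, (j < L)%nat -> t j < t (S j)) ->
  forall a b, (a < b)%nat -> (b <= L)%nat -> t a < t b.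
Proof.
  intros Ht a b Hab HbL. induction b as [|b IH]; [lia|].
  destruct (Nat.eq_dec a b) as [->|Hne]; [apply Ht; lia|].
  apply Rlt_trans with (t b); [apply IH; lia|apply Ht; lia].
Qed.

Lemma grid_le (t : nat -> R) (L : nat) :
  (forall j, (j < L)%nat -> t j < t (S j)) ->
  forall a b, (a <= b)%nat -> (b <= L)%nat -> t a <= t b.
Proof.
  intros Ht a b Hab HbL. destruct (Nat.eq_dec a b) as [->|Hne]; [lra|].
  left. apply (grid_lt t L Ht); lia.
Qed.

Lemma Hc_lt_compat (g0 g1 u v : R) :
  0 < g0 -> 0 < g1 -> 0 <= u -> u < v -> Hc g0 g1 u < Hc g0 g1 v.
Proof.
  intros Hg0 Hg1 Hu Huv. unfold Hc.
  assert (0 < g1 * (u + v)) by (apply Rmult_lt_0_compat; lra).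
  assert (0 < (v - u) * (g0 + g1 * (u + v) / 2)) by (apply Rmult_lt_0_compat; lra).
  replace (g0 * v + g1 * v ^ 2 / 2)
    with (g0 * u + g1 * u ^ 2 / 2 + (v - u) * (g0 + g1 * (u + v) / 2)) by field.
  lra.
Qed.

(* The paper's quadratic for [s]: continuity at [tau] of the cumulative hazard
   [e^(a x) Hc] under the cumulative exposure model. *)
Definition is_ce_shift (g0 g1 a x1 x2 tau s : R) : Prop :=
  Hc g0 g1 (tau + s) = exp (a * (x1 - x2)) * Hc g0 g1 tau.

Lemma ce_shift_of_root (g0 g1 a x1 x2 tau s : R) :
  g1 / 2 * (tau + s) ^ 2 + g0 * (tau + s) - exp (a * (x1 - x2)) * (g0 * tau + g1 * tau ^ 2 / 2) = 0 ->
  is_ce_shift g0 g1 a x1 x2 tau s.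
Proof. unfold is_ce_shift, Hc. intros. lra. Qed.

Lemma Rx2_tau (g0 g1 a x1 x2 tau s : R) :
  is_ce_shift g0 g1 a x1 x2 tau s -> Rx2 g0 g1 a x2 s tau = Rx1 g0 g1 a x1 tau.
Proof.
  intros Hs. unfold Rx2, Rx1. rewrite Hs, <- Rmult_assoc, <- exp_plus.
  do 4 f_equal. ring.
Qed.

Lemma Rx1_lt (g0 g1 a x1 u v : R) :
  0 < g0 -> 0 < g1 -> 0 <= u -> u < v -> Rx1 g0 g1 a x1 v < Rx1 g0 g1 a x1 u.
Proof.
  intros Hg0 Hg1 Hu Huv. unfold Rx1. apply exp_increasing.
  pose proof (exp_pos (a * x1)). pose proof (Hc_lt_compat g0 g1 u v). nra.
Qed.

Lemma Rx2_lt (g0 g1 a x2 s u v : R) :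
  0 < g0 -> 0 < g1 -> 0 <= u + s -> u < v -> Rx2 g0 g1 a x2 s v < Rx2 g0 g1 a x2 s u.
Proof.
  intros Hg0 Hg1 Hu Huv. unfold Rx2. apply exp_increasing.
  pose proof (exp_pos (a * x2)). pose proof (Hc_lt_compat g0 g1 (u + s) (v + s)). nra.
Qed.

Lemma Rstep_lt (g0 g1 a x1 x2 tau s u v : R) :
  0 < g0 -> 0 < g1 -> 0 < tau + s -> is_ce_shift g0 g1 a x1 x2 tau s ->
  0 <= u -> u < v -> Rstep g0 g1 a x1 x2 tau s v < Rstep g0 g1 a x1 x2 tau s u.
Proof.
  intros Hg0 Hg1 Hs Hce Hu Huv. unfold Rstep.
  destruct (Rle_dec v tau); destruct (Rle_dec u tau); try lra.
  - apply Rx1_lt; lra.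
  - apply Rlt_le_trans with (Rx2 g0 g1 a x2 s tau); [apply Rx2_lt; lra|].
    rewrite (Rx2_tau _ _ _ x1 _ _ _ Hce).
    destruct (Req_dec u tau) as [->|]; [lra|]. left. apply Rx1_lt; lra.
  - apply Rx2_lt; lra.
Qed.

Lemma Rstep_0 (g0 g1 a x1 x2 tau s : R) :
  0 <= tau -> Rstep g0 g1 a x1 x2 tau s 0 = 1.
Proof.
  intros Htau. unfold Rstep. destruct (Rle_dec 0 tau); [|lra].
  unfold Rx1, Hc. rewrite <- exp_0. f_equal. field.
Qed.

Lemma sum1_pij (g0 g1 a x1 x2 tau s : R) (L : nat) (t : nat -> R) :
  sum1 L (pij g0 g1 a x1 x2 tau s L t) = Rstep g0 g1 a x1 x2 tau s (t 0%nat).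
Proof.
  unfold sum1. destruct L as [|m]; [reflexivity|].
  simpl sum_f_R0 at 1. unfold pij at 2.
  replace (S (S m) <=? S m)%nat with false by (symmetry; apply Nat.leb_gt; lia).
  rewrite (sum_eq _ (fun i => Rstep g0 g1 a x1 x2 tau s (t i)
                              - Rstep g0 g1 a x1 x2 tau s (t (S i)))).
  - rewrite sum_f_R0_telescope. ring.
  - intros i Hi. unfold pij.
    replace (S i <=? S m)%nat with true by (symmetry; apply Nat.leb_le; lia).
    replace (S i - 1)%nat with i by lia. reflexivity.
Qed.

Lemma pij_pos (g0 g1 a x1 x2 tau s : R) (L : nat) (t : nat -> R) (j : nat) :
  0 < g0 -> 0 < g1 -> 0 < tau + s -> is_ce_shift g0 g1 a x1 x2 tau s ->
  t 0%nat = 0 -> (forall j, (j < L)%nat -> t j < t (S j)) -> (1 <= j)%nat ->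
  0 < pij g0 g1 a x1 x2 tau s L t j.
Proof.
  intros Hg0 Hg1 Hs Hce Ht0 Ht Hj. unfold pij.
  destruct (Nat.leb_spec j L) as [HjL|HjL].
  - apply Rlt_0_minus, Rstep_lt; auto.
    + rewrite <- Ht0. apply (grid_le t L Ht); lia.
    + apply (grid_lt t L Ht); lia.
  - unfold Rstep, Rx1, Rx2. destruct Rle_dec; apply exp_pos.
Qed.

Lemma Hc_pos_root (g0 g1 C u : R) :
  0 < g0 -> 0 < g1 -> 0 < u -> Hc g0 g1 u = C ->
  u = (- g0 + sqrt (g0 ^ 2 + 2 * g1 * C)) / g1.
Proof.
  intros Hg0 Hg1 Hu HC.
  replace (g0 ^ 2 + 2 * g1 * C) with ((g1 * u + g0) ^ 2) by (rewrite <- HC; unfold Hc; field).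
  rewrite sqrt_pow2 by nra. field. lra.
Qed.

Definition dot3 (d0 d1 d2 : R) (f : nat -> R) : R :=
  d0 * f 0%nat + d1 * f 1%nat + d2 * f 2%nat.

Lemma is_derive_Rx1_line (g0 g1 a d0 d1 d2 x1 t0 : R) :
  is_derive (fun h => Rx1 (g0 + h * d0) (g1 + h * d1) (a + h * d2) x1 t0) 0
    (dot3 d0 d1 d2 (fun i => dRx1 i g0 g1 a x1 t0)).
Proof.
  unfold dot3, dRx1, Rx1, Hc, k2. auto_derive; [auto|].
  rewrite !Rmult_0_l, !Rplus_0_r. unfold Rdiv. cbn [pow]. ring.
Qed.

Lemma is_derive_Rstep_line_le (g0 g1 a d0 d1 d2 x1 x2 tau t0 : R) (s : R -> R) :
  t0 <= tau ->
  is_derive (fun h => Rstep (g0 + h * d0) (g1 + h * d1) (a + h * d2) x1 x2 tau (s h) t0) 0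
    (dot3 d0 d1 d2 (fun i => dRx1 i g0 g1 a x1 t0)).
Proof.
  intros Ht0. eapply is_derive_ext; [|apply is_derive_Rx1_line].
  intro h. unfold Rstep. destruct (Rle_dec t0 tau); [reflexivity|lra].
Qed.

(* Implicit differentiation of [is_ce_shift] in the direction (d0, d1, d2);
   the denominator [k1 (tau + s)] is the derivative of [Hc] at [tau + s]. *)
Definition ce_shift_deriv (g0 g1 a d0 d1 d2 x1 x2 tau s : R) : R :=
  - (d0 * (tau + s - exp (a * (x1 - x2)) * tau)
     + d1 * ((tau + s) ^ 2 / 2 - exp (a * (x1 - x2)) * (tau ^ 2 / 2))
     - d2 * (x1 - x2) * exp (a * (x1 - x2)) * Hc g0 g1 tau) / k1 g0 g1 (tau + s).

Section Line.

Variables (g0 g1 a d0 d1 d2 x1 x2 tau : R) (s : R -> R).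
Hypotheses (Hg0 : 0 < g0) (Hg1 : 0 < g1) (Htau : 0 < tau).
Hypothesis Hline : locally 0 (fun h =>
  0 < g0 + h * d0 /\ 0 < g1 + h * d1 /\ 0 < tau + s h /\
  is_ce_shift (g0 + h * d0) (g1 + h * d1) (a + h * d2) x1 x2 tau (s h)).

Lemma ce_shift_at_0 : 0 < tau + s 0 /\ is_ce_shift g0 g1 a x1 x2 tau (s 0).
Proof.
  destruct (locally_singleton _ _ Hline) as (_ & _ & Hu & Hce).
  rewrite !Rmult_0_l, !Rplus_0_r in Hce. auto.
Qed.

Lemma ex_derive_shift : ex_derive s 0.
Proof.
  apply (ex_derive_ext_loc (fun h =>
    (- (g0 + h * d0) + sqrt ((g0 + h * d0) ^ 2 + 2 * (g1 + h * d1)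
        * (exp ((a + h * d2) * (x1 - x2)) * Hc (g0 + h * d0) (g1 + h * d1) tau)))
    / (g1 + h * d1) - tau)).
  - eapply filter_imp; [|exact Hline]. intros h (H0 & H1 & Hu & Hce).
    rewrite <- (Hc_pos_root _ _ _ _ H0 H1 Hu Hce). lra.
  - assert (HC : 0 < exp (a * (x1 - x2)) * Hc g0 g1 tau).
    { apply Rmult_lt_0_compat; [apply exp_pos|unfold Hc; nra]. }
    unfold Hc, Rdiv in *. cbn [pow] in HC.
    auto_derive. rewrite !Rmult_0_l, !Rplus_0_r. repeat split; nra.
Qed.

Lemma is_derive_shift : is_derive s 0 (ce_shift_deriv g0 g1 a d0 d1 d2 x1 x2 tau (s 0)).
Proof.
  pose proof ex_derive_shift as HS.
  destruct ce_shift_at_0 as [Hu _].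
  pose (F h := Hc (g0 + h * d0) (g1 + h * d1) (tau + s h)
               - exp ((a + h * d2) * (x1 - x2)) * Hc (g0 + h * d0) (g1 + h * d1) tau).
  assert (HF0 : is_derive F 0 0).
  { apply (is_derive_ext_loc (fun _ => 0)); [|auto_derive; auto].
    eapply filter_imp; [|exact Hline]. intros h (_ & _ & _ & Hce).
    unfold F. rewrite Hce. lra. }
  assert (HF : is_derive F 0
    (d0 * (tau + s 0) + d1 * (tau + s 0) ^ 2 / 2 + k1 g0 g1 (tau + s 0) * Derive s 0
     - exp (a * (x1 - x2)) * ((x1 - x2) * d2 * Hc g0 g1 tau + (d0 * tau + d1 * (tau ^ 2 / 2))))).
  { unfold F, Hc, k1. auto_derive; [auto|]. rewrite !Rmult_0_l, !Rplus_0_r.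
    change (Derive (fun x => s x) 0) with (Derive s 0). field. }
  assert (HD := is_derive_unique _ _ _ HF). rewrite (is_derive_unique _ _ _ HF0) in HD.
  assert (Hk : k1 g0 g1 (tau + s 0) <> 0) by (unfold k1; nra).
  replace (ce_shift_deriv g0 g1 a d0 d1 d2 x1 x2 tau (s 0)) with (Derive s 0).
  - apply Derive_correct, HS.
  - unfold ce_shift_deriv. field_simplify_eq; [lra|exact Hk].
Qed.

Lemma is_derive_Rx2_line (t0 : R) :
  is_derive (fun h => Rx2 (g0 + h * d0) (g1 + h * d1) (a + h * d2) x2 (s h) t0) 0
    (dot3 d0 d1 d2 (fun i => dRx2 i g0 g1 a x1 x2 tau (s 0) t0)).
Proof.
  destruct ce_shift_at_0 as [Hu Hce].
  pose proof ex_derive_shift as HS.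
  assert (HCtau : 0 < Hc g0 g1 tau) by (unfold Hc; nra).
  assert (Hc' : exp (a * (x1 - x2)) = Hc g0 g1 (tau + s 0) / Hc g0 g1 tau).
  { rewrite Hce. field. lra. }
  unfold dot3, dRx2. set (Rv := Rx2 g0 g1 a x2 (s 0) t0).
  unfold Rx2, Hc. auto_derive; [auto|]. rewrite !Rmult_0_l, !Rplus_0_r.
  change (exp (- _)) with Rv.
  change (Derive (fun x => s x) 0) with (Derive s 0).
  rewrite (is_derive_unique _ _ _ is_derive_shift).
  unfold ce_shift_deriv. rewrite Hc'. unfold Hc, k1, k2 in *.
  field. repeat split; nra.
Qed.

Lemma is_derive_Rstep_line_ge (t0 : R) :
  tau <= t0 ->
  is_derive (fun h => Rstep (g0 + h * d0) (g1 + h * d1) (a + h * d2) x1 x2 tau (s h) t0) 0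
    (dot3 d0 d1 d2 (fun i => dRx2 i g0 g1 a x1 x2 tau (s 0) t0)).
Proof.
  intros Ht0. destruct (Req_dec t0 tau) as [->|Hne].
  - (* at [tau] the step function is [Rx1], which agrees with [Rx2] along the line *)
    apply (is_derive_ext_loc (fun h => Rx2 (g0 + h * d0) (g1 + h * d1) (a + h * d2) x2 (s h) tau)).
    + eapply filter_imp; [|exact Hline]. intros h (_ & _ & _ & Hce).
      unfold Rstep. destruct (Rle_dec tau tau); [|lra]. apply Rx2_tau, Hce.
    + apply is_derive_Rx2_line.
  - eapply is_derive_ext; [|apply is_derive_Rx2_line].
    intro h. unfold Rstep. destruct (Rle_dec t0 tau); [lra|reflexivity].
Qed.

Lemma is_derive_pij_line (L k : nat) (t : nat -> R) (j : nat) :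
  (forall j, (j < L)%nat -> t j < t (S j)) -> (k < L)%nat -> t k = tau -> (1 <= j)%nat ->
  is_derive (fun h => pij (g0 + h * d0) (g1 + h * d1) (a + h * d2) x1 x2 tau (s h) L t j) 0
    (dot3 d0 d1 d2 (fun i => wj i g0 g1 a x1 x2 tau (s 0) L t j)).
Proof.
  intros Ht HkL Htk Hj. unfold pij, wj.
  destruct (Nat.ltb_spec L j) as [HLj|HjL].
  - replace (j <=? L)%nat with false by (symmetry; apply Nat.leb_gt; lia).
    apply is_derive_Rstep_line_ge. rewrite <- Htk. apply (grid_le t L Ht); lia.
  - replace (j <=? L)%nat with true by (symmetry; apply Nat.leb_le; lia).
    cbv iota.
    assert (Hjj : t (j - 1)%nat < t j) by (apply (grid_lt t L Ht); lia).
    destruct (Rlt_dec (t (j - 1)%nat) tau) as [Hlt|Hge].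
    + assert (Hjk : t j <= tau).
      { rewrite <- Htk. destruct (Nat.le_gt_cases k (j - 1)) as [Hkj|Hjk].
        - pose proof (grid_le t L Ht k (j - 1) Hkj ltac:(lia)). lra.
        - apply (grid_le t L Ht); lia. }
      eapply is_derive_val.
      * apply is_derive_Rminus; apply is_derive_Rstep_line_le; lra.
      * unfold dot3. ring.
    + eapply is_derive_val.
      * apply is_derive_Rminus; apply is_derive_Rstep_line_ge; lra.
      * unfold dot3. ring.
Qed.

Lemma sum1_wj_line (L k : nat) (t : nat -> R) :
  t 0%nat = 0 -> (forall j, (j < L)%nat -> t j < t (S j)) -> (k < L)%nat -> t k = tau ->
  sum1 L (fun j => dot3 d0 d1 d2 (fun i => wj i g0 g1 a x1 x2 tau (s 0) L t j)) = 0.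
Proof.
  intros Ht0 Ht HkL Htk.
  pose (q j h := pij (g0 + h * d0) (g1 + h * d1) (a + h * d2) x1 x2 tau (s h) L t j).
  assert (Hsum : is_derive (fun h => sum1 L (fun j => q j h)) 0
                   (sum1 L (fun j => dot3 d0 d1 d2 (fun i => wj i g0 g1 a x1 x2 tau (s 0) L t j)))).
  { apply is_derive_sum1. intros j Hj. apply (is_derive_pij_line L k); auto; lia. }
  rewrite <- (is_derive_unique _ _ _ Hsum). apply is_derive_unique.
  (* the cell probabilities sum to [Rstep (t 0) = 1] all along the line *)
  apply (is_derive_ext (fun _ => 1)); [|auto_derive; auto].
  intro h. symmetry. unfold q.
  rewrite <- (Rstep_0 (g0 + h * d0) (g1 + h * d1) (a + h * d2) x1 x2 tau (s h)) by lra.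
  rewrite <- Ht0. apply sum1_pij.
Qed.

End Line.

Lemma dpd_stationary (x1 x2 tau : R) (L k : nat) (t : nat -> R) (s : R -> R -> R -> R)
  (p : nat -> R) (beta g0 g1 a d0 d1 d2 : R) :
  0 < tau -> t 0%nat = 0 -> (forall j, (j < L)%nat -> t j < t (S j)) ->
  (k < L)%nat -> t k = tau ->
  (forall g0 g1 a, 0 < g0 -> 0 < g1 -> 0 < a ->
     0 < tau + s g0 g1 a /\ is_ce_shift g0 g1 a x1 x2 tau (s g0 g1 a)) ->
  (forall j, 0 <= p j) -> 0 <= beta ->
  0 < g0 -> 0 < g1 -> 0 < a ->
  (forall g0' g1' a', 0 < g0' -> 0 < g1' -> 0 < a' ->
     dpd beta L p (pij g0 g1 a x1 x2 tau (s g0 g1 a) L t)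
       <= dpd beta L p (pij g0' g1' a' x1 x2 tau (s g0' g1' a') L t)) ->
  sum1 L (fun j => dot3 d0 d1 d2 (fun i => wj i g0 g1 a x1 x2 tau (s g0 g1 a) L t j)
                   * Rpower (pij g0 g1 a x1 x2 tau (s g0 g1 a) L t j) (beta - 1)
                   * (p j - pij g0 g1 a x1 x2 tau (s g0 g1 a) L t j)) = 0.
Proof.
  intros Htau Ht0 Ht HkL Htk Hs Hp Hb Hg0 Hg1 Ha Hmin.
  pose (sl h := s (g0 + h * d0) (g1 + h * d1) (a + h * d2)).
  assert (Hpos : locally 0 (fun h => 0 < g0 + h * d0 /\ 0 < g1 + h * d1 /\ 0 < a + h * d2)).
  { repeat apply filter_and; apply locally_pos_affine; assumption. }
  assert (Hline : locally 0 (fun h => 0 < g0 + h * d0 /\ 0 < g1 + h * d1 /\ 0 < tau + sl h /\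
    is_ce_shift (g0 + h * d0) (g1 + h * d1) (a + h * d2) x1 x2 tau (sl h))).
  { eapply filter_imp; [|exact Hpos]. intros h (H0 & H1 & H2).
    destruct (Hs _ _ _ H0 H1 H2). unfold sl. tauto. }
  assert (Hsl0 : sl 0 = s g0 g1 a) by (unfold sl; rewrite !Rmult_0_l, !Rplus_0_r; reflexivity).
  pose (q j h := pij (g0 + h * d0) (g1 + h * d1) (a + h * d2) x1 x2 tau (sl h) L t j).
  pose (W j := dot3 d0 d1 d2 (fun i => wj i g0 g1 a x1 x2 tau (sl 0) L t j)).
  assert (Hq0 : (fun j => q j 0) = pij g0 g1 a x1 x2 tau (s g0 g1 a) L t).
  { unfold q. rewrite !Rmult_0_l, !Rplus_0_r, Hsl0. reflexivity. }
  assert (Hq0j : forall j, q j 0 = pij g0 g1 a x1 x2 tau (s g0 g1 a) L t j)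
    by (intro j; rewrite <- Hq0; reflexivity).
  assert (Hq : forall j, (1 <= j <= S L)%nat -> is_derive (q j) 0 (W j))
    by (intros j Hj; apply (is_derive_pij_line g0 g1 a d0 d1 d2 x1 x2 tau sl) with (k := k);
        auto; lia).
  assert (Hqpos : forall j, (1 <= j <= S L)%nat -> 0 < q j 0).
  { intros j Hj. rewrite Hq0j. destruct (Hs g0 g1 a Hg0 Hg1 Ha).
    apply pij_pos; auto; lia. }
  assert (HW : sum1 L W = 0)
    by (apply (sum1_wj_line g0 g1 a d0 d1 d2 x1 x2 tau sl) with (k := k); auto).
  pose proof (is_derive_dpd q W beta 0 p L Hq Hqpos Hp HW) as HD.
  apply is_derive_local_min in HD.
  - apply Rmult_integral in HD. destruct HD as [HD|HD]; [lra|].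
    rewrite <- HD. apply sum1_ext. intros j _. unfold W. rewrite Hq0j, Hsl0. reflexivity.
  - eapply filter_imp; [|exact Hpos]. intros h (H0 & H1 & H2). cbv beta.
    rewrite Hq0. apply Hmin; auto.
Qed.

Theorem theorem1 (x1 x2 tau : R) (L k : nat) (t : nat -> R)
  (s : R -> R -> R -> R) (n : nat -> nat) (beta g0h g1h a1h : R) :
  x1 < x2 -> 0 < tau ->
  t 0%nat = 0 -> (forall j, (j < L)%nat -> t j < t (S j)) ->
  (1 <= k)%nat -> (k < L)%nat -> t k = tau ->
  (* s(theta) = u - tau, u the (unique) positive root of the quadratic *)
  (forall g0 g1 a1, 0 < g0 -> 0 < g1 -> 0 < a1 ->
     0 < tau + s g0 g1 a1 /\
     g1 / 2 * (tau + s g0 g1 a1) ^ 2 + g0 * (tau + s g0 g1 a1)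
       - exp (a1 * (x1 - x2)) * (g0 * tau + g1 * tau ^ 2 / 2) = 0) ->
  0 < Ntot L n -> 0 <= beta ->
  0 < g0h -> 0 < g1h -> 0 < a1h ->
  (* (g0h, g1h, a1h) is a minimum density power divergence estimator over Theta *)
  (forall g0 g1 a1, 0 < g0 -> 0 < g1 -> 0 < a1 ->
     dpd beta L (phat L n) (pij g0h g1h a1h x1 x2 tau (s g0h g1h a1h) L t)
       <= dpd beta L (phat L n) (pij g0 g1 a1 x1 x2 tau (s g0 g1 a1) L t)) ->
  forall i, (i < 3)%nat ->
    Ucomp i beta g0h g1h a1h x1 x2 tau (s g0h g1h a1h) L t (phat L n) = 0.
Proof.
  intros _ Htau Ht0 Ht _ HkL Htk Hroot HN Hb Hg0 Hg1 Ha Hmin i Hi.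
  assert (Hs : forall g0 g1 a1, 0 < g0 -> 0 < g1 -> 0 < a1 ->
    0 < tau + s g0 g1 a1 /\ is_ce_shift g0 g1 a1 x1 x2 tau (s g0 g1 a1)).
  { intros g0 g1 a1 H0 H1 H2. destruct (Hroot g0 g1 a1 H0 H1 H2) as [Hu Hq].
    split; [exact Hu|apply ce_shift_of_root, Hq]. }
  assert (Hp : forall j, 0 <= phat L n j).
  { intro j. apply Rdiv_le_0_compat; [apply pos_INR|exact HN]. }
  pose proof (fun d0 d1 d2 => dpd_stationary x1 x2 tau L k t s (phat L n) beta g0h g1h a1h
    d0 d1 d2 Htau Ht0 Ht HkL Htk Hs Hp Hb Hg0 Hg1 Ha Hmin) as Hdir.
  unfold Ucomp.
  destruct i as [|[|[|i]]];
    [rewrite <- (Hdir 1 0 0)|rewrite <- (Hdir 0 1 0)|rewrite <- (Hdir 0 0 1)|lia];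
    apply sum1_ext; intros j _; unfold dot3; ring.
Qed.
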